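(* Let $\lambda_0>\lambda_1$ be countable nonzero additively indecomposable ordinals. Then $\lambda_0\le_{sH}\lambda_0+\lambda_1$ and $\lambda_1\le_{sH}\lambda_0+\lambda_1$.
   Context: Ordinals are identified with linear orders $(\eta,<)$; $\lambda_0+\lambda_1$ denotes ordinal addition. A copy of a countable structure is an isomorphic structure with domain $\omega$. Hyper-Medvedev reducibility: for countable structures, $\mathcal{A}\le_{sH}\mathcal{B}$ means there is a single (pair of) index(es) for a $\Delta^1_1$ definition relative to an oracle such that for every copy $B$ of $\mathcal{B}$, the set defined by this $\Delta^1_1(B)$ definition is (the atomic diagram of) a copy of $\mathcal{A}$; i.e. a copy of $\mathcal{A}$ is uniformly $\Delta^1_1$-definable in every copy of $\mathcal{B}$. An ordinal $\lambda>0$ is additively indecomposable if $\beta+\gamma<\lambda$ whenever $\beta,\gamma<\lambda$. *)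

From Stdlib Require Import Arith List.

Definition is_wellorder (A : Type) (lt : A -> A -> Prop) : Prop :=
  (forall x, ~ lt x x) /\
  (forall x y z, lt x y -> lt y z -> lt x z) /\
  (forall x y, lt x y \/ x = y \/ lt y x) /\
  well_founded lt.

Definition countable (A : Type) : Prop :=
  exists f : A -> nat, forall x y, f x = f y -> x = y.

Definition order_iso (A B : Type) (ltA : A -> A -> Prop) (ltB : B -> B -> Prop) : Prop :=
  exists (f : A -> B) (g : B -> A),
    (forall x, g (f x) = x) /\ (forall y, f (g y) = y) /\
    (forall x y, ltA x y <-> ltB (f x) (f y)).

(* proper initial segment below a : the ordinals < lambda are exactly these *)
Definition seg (A : Type) (lt : A -> A -> Prop) (a : A) : Type := { x : A | lt x a }.
Definition seg_lt (A : Type) (lt : A -> A -> Prop) (a : A) (x y : seg A lt a) : Prop :=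
  lt (proj1_sig x) (proj1_sig y).

(* ordinal addition: the order sum, A first then B *)
Definition sum_lt (A B : Type) (ltA : A -> A -> Prop) (ltB : B -> B -> Prop)
  (x y : A + B) : Prop :=
  match x, y with
  | inl a, inl a' => ltA a a'
  | inl _, inr _ => True
  | inr _, inl _ => False
  | inr b, inr b' => ltB b b'
  end.

Definition ord_lt (A1 : Type) (lt1 : A1 -> A1 -> Prop) (A0 : Type) (lt0 : A0 -> A0 -> Prop) : Prop :=
  exists a : A0, order_iso A1 (seg A0 lt0 a) lt1 (seg_lt A0 lt0 a).

(* lambda > 0 and beta + gamma < lambda whenever beta, gamma < lambda *)
Definition add_indecomposable (A : Type) (lt : A -> A -> Prop) : Prop :=
  inhabited A /\
  forall a b : A, exists c : A,
    order_iso (seg A lt a + seg A lt b) (seg A lt c)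
      (sum_lt (seg A lt a) (seg A lt b) (seg_lt A lt a) (seg_lt A lt b))
      (seg_lt A lt c).

(* A relational structure on a subset of omega in the language {<=}, given by
   its relation R; its domain is {n | R n n}. *)
Definition is_copy (A : Type) (lt : A -> A -> Prop) (R : nat -> nat -> Prop) : Prop :=
  (forall m n, R m n -> R m m /\ R n n) /\
  (forall m n, n < m -> R m m -> R n n) /\
  exists (f : A -> nat) (g : nat -> A),
    (forall x, R (f x) (f x)) /\
    (forall x, g (f x) = x) /\
    (forall n, R n n -> f (g n) = n) /\
    (forall x y, (lt x y \/ x = y) <-> R (f x) (f y)).

Inductive term : Type :=
| tvar : nat -> term          (* de Bruijn number variable *)
| tzero : term
| tsucc : term -> term
| tadd : term -> term -> term
| tmul : term -> term -> term.

(* arithmetical formulas in one set variable X and the oracle relation O *)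
Inductive aform : Type :=
| feq : term -> term -> aform
| flt : term -> term -> aform
| fmemX : term -> aform
| foracle : term -> term -> aform
| fnot : aform -> aform
| fand : aform -> aform -> aform
| for_ : aform -> aform -> aform
| fall : aform -> aform
| fex : aform -> aform.

Fixpoint teval (e : nat -> nat) (t : term) : nat :=
  match t with
  | tvar k => e k
  | tzero => 0
  | tsucc t => S (teval e t)
  | tadd t u => teval e t + teval e u
  | tmul t u => teval e t * teval e u
  end.

Definition scons (n : nat) (e : nat -> nat) : nat -> nat :=
  fun k => match k with 0 => n | S k => e k end.

Fixpoint sat (O : nat -> nat -> Prop) (X : nat -> Prop) (e : nat -> nat) (p : aform) : Prop :=
  match p with
  | feq t u => teval e t = teval e u
  | flt t u => teval e t < teval e u
  | fmemX t => X (teval e t)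
  | foracle t u => O (teval e t) (teval e u)
  | fnot p => ~ sat O X e p
  | fand p q => sat O X e p /\ sat O X e q
  | for_ p q => sat O X e p \/ sat O X e q
  | fall p => forall n, sat O X (scons n e) p
  | fex p => exists n, sat O X (scons n e) p
  end.

Definition env2 (m n : nat) : nat -> nat := scons m (scons n (fun _ => 0)).

Definition sigma11_rel (phi : aform) (O : nat -> nat -> Prop) (m n : nat) : Prop :=
  exists X : nat -> Prop, sat O X (env2 m n) phi.
Definition pi11_rel (psi : aform) (O : nat -> nat -> Prop) (m n : nat) : Prop :=
  forall X : nat -> Prop, sat O X (env2 m n) psi.

Definition sH_le (copyA copyB : (nat -> nat -> Prop) -> Prop) : Prop :=
  exists phi psi : aform,
    forall B, copyB B ->
      exists R, copyA R /\
        (forall m n, R m n <-> sigma11_rel phi B m n) /\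
        (forall m n, R m n <-> pi11_rel psi B m n).

(* In a copy of lambda0 + lambda1, a point x lies in the first summand iff
   (below x) + (below x) embeds into the copy, and in the second summand iff the
   copy embeds into (below x) + (below x).  Additive indecomposability of lambda0
   and lambda1 < lambda0 make both tests correct, because a well-order never
   embeds below one of its own points.  Both tests are Sigma^1_1 in the copy
   and they are complementary on its domain, so each summand is uniformly
   Delta^1_1.  Renumbering a Delta^1_1 subset increasingly is again Delta^1_1:
   its enumeration is the unique solution of an arithmetical condition, which
   may be quantified existentially or universally. *)

From Stdlib Require Import Arith Lia Setoid Classical ClassicalEpsilon
  FunctionalExtensionality PropExtensionality IndefiniteDescription.

Definition npair (a b : nat) : nat := (a + b) * (a + b) + a.

Lemma npair_inj a b a' b' : npair a b = npair a' b' -> a = a' /\ b = b'.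
Proof.
  unfold npair; intro E.
  assert (Hs : a + b = a' + b').
  { destruct (lt_eq_lt_dec (a + b) (a' + b')) as [[h|h]|h]; [exfalso| |exfalso]; auto.
    - assert ((a + b + 1) * (a + b + 1) <= (a' + b') * (a' + b')) by (apply Nat.mul_le_mono; lia).
      nia.
    - assert ((a' + b' + 1) * (a' + b' + 1) <= (a + b) * (a + b)) by (apply Nat.mul_le_mono; lia).
      nia. }
  rewrite Hs in E; lia.
Qed.

(* A set [V] of naturals codes the binary relation [decode V]; the columns
   [decode X c] of one set [X] code a whole family of sets. *)
Definition decode (V : nat -> Prop) (i j : nat) : Prop := V (npair i j).
Definition encode (G : nat -> nat -> Prop) (k : nat) : Prop :=
  exists i j, k = npair i j /\ G i j.

Lemma decode_encode G : decode (encode G) = G.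
Proof.
  extensionality i; extensionality j; apply propositional_extensionality.
  unfold decode, encode; split.
  - intros (i' & j' & E & h); apply npair_inj in E as [-> ->]; exact h.
  - intro h; eauto.
Qed.

Fixpoint lift (t : term) : term :=
  match t with
  | tvar k => tvar (S k)
  | tzero => tzero
  | tsucc u => tsucc (lift u)
  | tadd u v => tadd (lift u) (lift v)
  | tmul u v => tmul (lift u) (lift v)
  end.

Lemma teval_lift n e t : teval (scons n e) (lift t) = teval e t.
Proof. induction t; simpl; auto. Qed.

Definition lift2 (t : term) : term := lift (lift t).
Definition lift4 (t : term) : term := lift2 (lift2 t).

Fixpoint tnum (k : nat) : term := match k with 0 => tzero | S k => tsucc (tnum k) end.
Definition tpair (a b : term) : term := tadd (tmul (tadd a b) (tadd a b)) a.

Definition fimp (p q : aform) : aform := for_ (fnot p) q.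
Definition fiff (p q : aform) : aform := fand (fimp p q) (fimp q p).
Definition fdom (t : term) : aform := foracle t t.
Definition fstrict (t u : term) : aform := fand (foracle t u) (fnot (feq t u)).
(* [(i, j)] belongs to relation [b] of the family coded by column [c] of [X] *)
Definition frel (c : term) (b : nat) (i j : term) : aform :=
  fmemX (tpair c (tpair (tnum b) (tpair i j))).

Definition strict (O : nat -> nat -> Prop) (a b : nat) : Prop := O a b /\ a <> b.

Lemma not_or_iff_imp (P Q : Prop) : (~ P \/ Q) <-> (P -> Q).
Proof. split; [tauto|]. intro h; destruct (classic P); tauto. Qed.

Ltac unfold_sat :=
  unfold fiff, fimp, fstrict, fdom, frel, tpair, lift4, lift2, strict, decode, npair;
  cbn [sat teval tnum]; repeat setoid_rewrite teval_lift; cbn [scons];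
  repeat setoid_rewrite not_or_iff_imp.

Record witnessed_test := {
  test_form : term -> term -> aform;
  test_sem : (nat -> nat -> Prop) -> (nat -> Prop) -> nat -> Prop;
  test_form_sat : forall O X e c x,
    sat O X e (test_form c x) <-> test_sem O (decode X (teval e c)) (teval e x) }.

Definition total_below (O : nat -> nat -> Prop) (G : nat -> nat -> Prop) (x : nat) : Prop :=
  forall i, strict O i x -> exists j, O j j /\ G i j.

Definition monotone_below (O : nat -> nat -> Prop) (G : nat -> nat -> Prop) (x : nat) : Prop :=
  forall i i' j j', G i j -> G i' j' -> strict O i x -> strict O i' x ->
    strict O i i' -> strict O j j'.

(* [W] codes two relations [decode (decode W b)] mapping the predecessors of
   [x] into the domain: an embedding of (below x) + (below x). *)
Definition seg_twice_embeds (O : nat -> nat -> Prop) (W : nat -> Prop) (x : nat) : Prop :=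
  total_below O (decode (decode W 0)) x /\ total_below O (decode (decode W 1)) x /\
  monotone_below O (decode (decode W 0)) x /\ monotone_below O (decode (decode W 1)) x /\
  (forall i i' j j', decode (decode W 0) i j -> decode (decode W 1) i' j' ->
     strict O i x -> strict O i' x -> strict O j j').

(* [decode (decode W 0)] maps the domain below [x] and [decode W 1] marks the
   points sent to the second copy: an embedding into (below x) + (below x). *)
Definition embeds_in_seg_twice (O : nat -> nat -> Prop) (W : nat -> Prop) (x : nat) : Prop :=
  (forall k, O k k -> exists j, decode (decode W 0) k j /\ strict O j x) /\
  (forall k k' j j', decode (decode W 0) k j -> decode (decode W 0) k' j' ->
     O k k -> O k' k' -> strict O k k' ->
     (~ decode W 1 k /\ decode W 1 k') \/
     ((decode W 1 k <-> decode W 1 k') /\ strict O j j')).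

Definition total_below_form (c x : term) (b : nat) : aform :=
  fall (fimp (fstrict (tvar 0) (lift x))
    (fex (fand (fdom (tvar 0)) (frel (lift2 c) b (tvar 1) (tvar 0))))).

Definition monotone_below_form (c x : term) (b : nat) : aform :=
  fall (fall (fall (fall
    (fimp (frel (lift4 c) b (tvar 3) (tvar 1)) (fimp (frel (lift4 c) b (tvar 2) (tvar 0))
    (fimp (fstrict (tvar 3) (lift4 x)) (fimp (fstrict (tvar 2) (lift4 x))
    (fimp (fstrict (tvar 3) (tvar 2)) (fstrict (tvar 1) (tvar 0)))))))))).

Definition below_form (c x : term) : aform :=
  fall (fall (fall (fall
    (fimp (frel (lift4 c) 0 (tvar 3) (tvar 1)) (fimp (frel (lift4 c) 1 (tvar 2) (tvar 0))
    (fimp (fstrict (tvar 3) (lift4 x)) (fimp (fstrict (tvar 2) (lift4 x))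
    (fstrict (tvar 1) (tvar 0))))))))).

Definition seg_twice_embeds_form (c x : term) : aform :=
  fand (total_below_form c x 0) (fand (total_below_form c x 1)
    (fand (monotone_below_form c x 0) (fand (monotone_below_form c x 1) (below_form c x)))).

Lemma seg_twice_embeds_form_sat O X e c x :
  sat O X e (seg_twice_embeds_form c x) <->
  seg_twice_embeds O (decode X (teval e c)) (teval e x).
Proof.
  unfold seg_twice_embeds_form, total_below_form, monotone_below_form, below_form,
    seg_twice_embeds, total_below, monotone_below.
  unfold_sat. reflexivity.
Qed.

Definition fsplit (c k : term) : aform := fmemX (tpair c (tpair (tnum 1) k)).

Definition embeds_in_seg_twice_form (c x : term) : aform :=
  fand
    (fall (fimp (fdom (tvar 0))
      (fex (fand (frel (lift2 c) 0 (tvar 1) (tvar 0)) (fstrict (tvar 0) (lift2 x))))))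
    (fall (fall (fall (fall
      (fimp (frel (lift4 c) 0 (tvar 3) (tvar 1)) (fimp (frel (lift4 c) 0 (tvar 2) (tvar 0))
      (fimp (fdom (tvar 3)) (fimp (fdom (tvar 2)) (fimp (fstrict (tvar 3) (tvar 2))
      (for_ (fand (fnot (fsplit (lift4 c) (tvar 3))) (fsplit (lift4 c) (tvar 2)))
        (fand (fiff (fsplit (lift4 c) (tvar 3)) (fsplit (lift4 c) (tvar 2)))
              (fstrict (tvar 1) (tvar 0))))))))))))).

Lemma embeds_in_seg_twice_form_sat O X e c x :
  sat O X e (embeds_in_seg_twice_form c x) <->
  embeds_in_seg_twice O (decode X (teval e c)) (teval e x).
Proof.
  unfold embeds_in_seg_twice_form, embeds_in_seg_twice, fsplit.
  unfold_sat. reflexivity.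
Qed.

Definition seg_twice_embeds_test : witnessed_test :=
  {| test_form_sat := seg_twice_embeds_form_sat |}.
Definition embeds_in_seg_twice_test : witnessed_test :=
  {| test_form_sat := embeds_in_seg_twice_form_sat |}.

Fixpoint count_below (P : nat -> Prop) (x : nat) : nat :=
  match x with
  | 0 => 0
  | S x => count_below P x + if excluded_middle_informative (P x) then 1 else 0
  end.

Lemma count_below_mono P x y : x <= y -> count_below P x <= count_below P y.
Proof. induction 1; simpl; lia. Qed.

Lemma count_below_lt P x y : P x -> x < y -> count_below P x < count_below P y.
Proof.
  intros Px lt_xy; pose proof (count_below_mono P (S x) y lt_xy) as h; simpl in h.
  destruct excluded_middle_informative; [lia | contradiction].
Qed.

Lemma count_below_inj P x y : P x -> P y -> count_below P x = count_below P y -> x = y.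
Proof.
  intros Px Py E; destruct (lt_eq_lt_dec x y) as [[h|h]|h]; auto.
  - pose proof (count_below_lt P x y Px h); lia.
  - pose proof (count_below_lt P y x Py h); lia.
Qed.

Lemma count_below_attained P x n :
  n < count_below P x -> exists z, z < x /\ P z /\ count_below P z = n.
Proof.
  induction x as [|x IH]; simpl; intro h; [lia|].
  destruct (Nat.lt_ge_cases n (count_below P x)) as [h'|h'].
  - destruct (IH h') as (z & ? & ? & ?); exists z; auto.
  - destruct excluded_middle_informative as [Px|]; [|lia].
    exists x; repeat split; auto; lia.
Qed.

Lemma count_below_gap P a b :
  (forall z, a <= z < b -> ~ P z) -> a <= b -> count_below P b = count_below P a.
Proof.
  intros gap le_ab; induction le_ab as [|b le_ab IH]; auto; simpl.
  destruct excluded_middle_informative as [Pb|]; [exfalso; apply (gap b); auto; lia|].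
  rewrite IH; [lia|]. intros z hz; apply gap; lia.
Qed.

(* [j] is the [i]-th element of [P], counting from 0 *)
Definition is_nth (P : nat -> Prop) (i j : nat) : Prop := P j /\ count_below P j = i.

Definition increasing_enum (H : nat -> nat -> Prop) : Prop :=
  (forall i i' j j', H i j -> H i' j' -> i < i' -> j < j') /\
  (forall i j, H (S i) j -> exists j', H i j') /\
  (forall i j j', H i j -> H i j' -> j = j').

Lemma is_nth_increasing_enum P : increasing_enum (is_nth P).
Proof.
  split; [|split].
  - intros i i' j j' [Pj <-] [Pj' <-] lt_c.
    destruct (Nat.lt_ge_cases j j') as [h|h]; auto.
    pose proof (count_below_mono P _ _ h); lia.
  - intros i j [Pj E]. destruct (count_below_attained P j i) as (z & _ & Pz & Ez); [lia|].
    exists z; split; auto.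
  - intros i j j' [Pj E] [Pj' E']. apply (count_below_inj P); congruence.
Qed.

Lemma increasing_enum_is_nth (P : nat -> Prop) (H : nat -> nat -> Prop) :
  increasing_enum H -> (forall i j, H i j -> P j) -> (forall j, P j -> exists i, H i j) ->
  forall i j, H i j <-> is_nth P i j.
Proof.
  intros (incr & down & func) sound complete.
  assert (counts : forall i j, H i j -> count_below P j = i).
  { induction i as [|i IH]; intros j Hij.
    - change 0 with (count_below P 0). apply count_below_gap; [|lia].
      intros z [_ hz] Pz. destruct (complete z Pz) as [[|iz] Hz].
      + pose proof (func _ _ _ Hz Hij); lia.
      + pose proof (incr _ _ _ _ Hij Hz ltac:(lia)); lia.
    - destruct (down _ _ Hij) as [j0 Hj0].
      pose proof (incr _ _ _ _ Hj0 Hij ltac:(lia)) as lt_j0.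
      rewrite (count_below_gap P (S j0) j); [|intros z [hz1 hz2] Pz|lia].
      + simpl. destruct excluded_middle_informative; [|exfalso; eauto].
        rewrite (IH _ Hj0); lia.
      + destruct (complete z Pz) as [iz Hz].
        destruct (lt_eq_lt_dec iz i) as [[h|h]|h]; [| subst iz |].
        * pose proof (incr _ _ _ _ Hz Hj0 h); lia.
        * pose proof (func _ _ _ Hz Hj0); lia.
        * destruct (Nat.eq_dec iz (S i)) as [->|h'].
          -- pose proof (func _ _ _ Hz Hij); lia.
          -- pose proof (incr _ _ _ _ Hij Hz ltac:(lia)); lia. }
  intros i j; split.
  - intro h; split; eauto.
  - intros [Pj <-]. destruct (complete j Pj) as [i Hi]. rewrite (counts _ _ Hi); exact Hi.
Qed.

Definition collapse (B : nat -> nat -> Prop) (P : nat -> Prop) (m n : nat) : Prop :=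
  exists j j', is_nth P m j /\ is_nth P n j' /\ B j j'.

Record copy_data (L : Type) (ltL : L -> L -> Prop) (B : nat -> nat -> Prop) := {
  code : L -> nat;
  point : nat -> L;
  copy_field : forall m n, B m n -> B m m /\ B n n;
  code_dom : forall x, B (code x) (code x);
  point_code : forall x, point (code x) = x;
  code_point : forall n, B n n -> code (point n) = n;
  code_le : forall x y, (ltL x y \/ x = y) <-> B (code x) (code y) }.
Arguments code {L ltL B}.
Arguments point {L ltL B}.
Arguments copy_field {L ltL B}.
Arguments code_dom {L ltL B}.
Arguments point_code {L ltL B}.
Arguments code_point {L ltL B}.
Arguments code_le {L ltL B}.

Lemma copy_data_of_is_copy L ltL B : is_copy L ltL B -> inhabited (copy_data L ltL B).
Proof.
  intros (field & _ & f & g & f_dom & gf & fg & f_le).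
  exact (inhabits (Build_copy_data _ _ _ f g field f_dom gf fg f_le)).
Qed.

Section Copies.
Variables (L : Type) (ltL : L -> L -> Prop) (B : nat -> nat -> Prop).
Variable C : copy_data L ltL B.

Lemma strict_code (irr : forall x, ~ ltL x x) x y : strict B (code C x) (code C y) <-> ltL x y.
Proof.
  unfold strict; split.
  - intros [h ne]. apply code_le in h as [h| ->]; tauto.
  - intro h; split; [apply code_le; auto|].
    intro E; apply (f_equal (point C)) in E; rewrite !point_code in E; subst; exact (irr y h).
Qed.

Lemma strict_code_inv (irr : forall x, ~ ltL x x) i y :
  strict B i (code C y) -> i = code C (point C i) /\ ltL (point C i) y.
Proof.
  intro h. assert (E : i = code C (point C i)).
  { symmetry; apply code_point, (copy_field C _ _ (proj1 h)). }
  split; auto. apply (strict_code irr); rewrite <- E; exact h.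
Qed.

Lemma collapse_is_copy (A : Type) (ltA : A -> A -> Prop) (iota : A -> L) :
  inhabited A -> (forall a a', iota a = iota a' -> a = a') ->
  (forall a a', ltA a a' <-> ltL (iota a) (iota a')) ->
  is_copy A ltA (collapse B (fun j => B j j /\ exists a, point C j = iota a)).
Proof.
  intros [a0] inj iota_lt. set (P := fun j => B j j /\ exists a, point C j = iota a).
  assert (P_code : forall a, P (code C (iota a))).
  { intro a; split; [apply code_dom|]. rewrite point_code; eauto. }
  set (f := fun a => count_below P (code C (iota a))).
  assert (f_inj : forall a a', f a = f a' -> a = a').
  { intros a a' E. apply inj. apply (count_below_inj P) in E; auto.
    rewrite <- (point_code C (iota a)), E; apply point_code. }
  set (g := fun n => match excluded_middle_informative (exists a, f a = n) with
                     | left h => proj1_sig (constructive_indefinite_description _ h)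
                     | right _ => a0 end).
  assert (g_spec : forall n, (exists a, f a = n) -> f (g n) = n).
  { intros n h; unfold g; destruct excluded_middle_informative; [|contradiction].
    apply proj2_sig. }
  split; [|split].
  - intros m n (j & j' & Hj & Hj' & Bjj'). destruct (copy_field C _ _ Bjj').
    split; [exists j, j | exists j', j']; tauto.
  - intros m n lt_nm (j & _ & [Pj <-] & _).
    destruct (count_below_attained P j n lt_nm) as (z & _ & Pz & Ez).
    exists z, z; repeat split; auto; apply Pz.
  - exists f, g; split; [|split; [|split]].
    + intro a; exists (code C (iota a)), (code C (iota a)).
      exact (conj (conj (P_code a) eq_refl) (conj (conj (P_code a) eq_refl) (code_dom C _))).
    + intro a; apply f_inj, g_spec; exists a; reflexivity.
    + intros n (j & _ & [[Bj [a Ea]] <-] & _).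
      assert (j = code C (iota a)) as -> by (rewrite <- Ea; symmetry; apply code_point; auto).
      apply g_spec; exists a; reflexivity.
    + intros a a'; split.
      * intro h. exists (code C (iota a)), (code C (iota a')).
        split; [split; auto | split; [split; auto |]].
        apply code_le. destruct h as [h| ->]; [left; apply iota_lt | right]; auto.
      * intros (j & j' & [Pj E] & [Pj' E'] & Bjj').
        apply (count_below_inj P) in E, E'; auto; subst.
        apply code_le in Bjj' as [h|h]; [left; apply iota_lt|right]; auto.
Qed.

End Copies.

(* Column 0 of [X] codes the enumeration; column [S j] holds the witness for [j]. *)
Definition fenum (i j : term) : aform := fmemX (tpair (tnum 0) (tpair i j)).

Definition increasing_enum_form : aform :=
  fand (fall (fall (fall (fall
         (fimp (fenum (tvar 3) (tvar 1)) (fimp (fenum (tvar 2) (tvar 0))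
         (fimp (flt (tvar 3) (tvar 2)) (flt (tvar 1) (tvar 0)))))))))
  (fand (fall (fall (fimp (fenum (tsucc (tvar 1)) (tvar 0)) (fex (fenum (tvar 2) (tvar 0))))))
        (fall (fall (fall
         (fimp (fenum (tvar 2) (tvar 1)) (fimp (fenum (tvar 2) (tvar 0))
         (feq (tvar 1) (tvar 0)))))))).

Definition enum_cond_form (P Q : witnessed_test) : aform :=
  fand (fall (fall (fimp (fenum (tvar 1) (tvar 0))
         (fand (fdom (tvar 0)) (test_form P (tsucc (tvar 0)) (tvar 0))))))
  (fand (fall (fimp (fdom (tvar 0))
         (for_ (test_form Q (tsucc (tvar 0)) (tvar 0)) (fex (fenum (tvar 0) (tvar 1))))))
  increasing_enum_form).

Definition enum_cond (P Q : witnessed_test) (O : nat -> nat -> Prop) (X : nat -> Prop) : Prop :=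
  (forall i j, decode (decode X 0) i j -> O j j /\ test_sem P O (decode X (S j)) j) /\
  (forall j, O j j -> test_sem Q O (decode X (S j)) j \/ exists i, decode (decode X 0) i j) /\
  increasing_enum (decode (decode X 0)).

Lemma enum_cond_form_sat P Q O X e : sat O X e (enum_cond_form P Q) <-> enum_cond P Q O X.
Proof.
  unfold enum_cond_form, enum_cond, increasing_enum_form, increasing_enum, fenum.
  unfold fimp, fdom; cbn [sat]. setoid_rewrite test_form_sat. unfold_sat. reflexivity.
Qed.

Definition enum_sigma (P Q : witnessed_test) : aform :=
  fand (enum_cond_form P Q)
    (fex (fex (fand (fenum (tvar 2) (tvar 1))
      (fand (fenum (tvar 3) (tvar 0)) (foracle (tvar 1) (tvar 0)))))).

Definition enum_pi (P Q : witnessed_test) : aform :=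
  fnot (fand (enum_cond_form P Q)
    (fall (fall (fimp (fenum (tvar 2) (tvar 1))
      (fimp (fenum (tvar 3) (tvar 0)) (fnot (foracle (tvar 1) (tvar 0)))))))).

Lemma enum_sigma_sat P Q O X m n :
  sat O X (env2 m n) (enum_sigma P Q) <->
  enum_cond P Q O X /\
  exists j j', decode (decode X 0) m j /\ decode (decode X 0) n j' /\ O j j'.
Proof.
  unfold enum_sigma; cbn [sat]; rewrite enum_cond_form_sat.
  unfold fenum; unfold_sat. reflexivity.
Qed.

Lemma enum_pi_sat P Q O X m n :
  sat O X (env2 m n) (enum_pi P Q) <->
  ~ (enum_cond P Q O X /\
     forall j j', decode (decode X 0) m j -> decode (decode X 0) n j' -> ~ O j j').
Proof.
  unfold enum_pi; cbn [sat]; rewrite enum_cond_form_sat.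
  unfold fenum; unfold_sat. reflexivity.
Qed.

Section EnumerationDefinable.
Variables (P Q : witnessed_test) (B : nat -> nat -> Prop) (D : nat -> Prop).
Hypothesis D_pos : forall j, D j <-> B j j /\ exists W, test_sem P B W j.
Hypothesis D_neg : forall j, B j j -> (~ D j <-> exists W, test_sem Q B W j).

Lemma enum_cond_is_nth X :
  enum_cond P Q B X -> forall i j, decode (decode X 0) i j <-> is_nth D i j.
Proof.
  intros (sound & complete & incr). apply increasing_enum_is_nth; auto.
  - intros i j h; apply D_pos. destruct (sound i j h); eauto.
  - intros j Dj. assert (Bj : B j j) by apply (D_pos j), Dj.
    destruct (complete j Bj) as [h|h]; auto.
    exfalso; apply (D_neg j Bj); eauto.
Qed.

Lemma enum_cond_witness :
  exists X, enum_cond P Q B X /\ forall i j, decode (decode X 0) i j <-> is_nth D i j.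
Proof.
  assert (choice_W : forall j, exists W,
    (D j -> test_sem P B W j) /\ (B j j -> ~ D j -> test_sem Q B W j)).
  { intro j. destruct (classic (D j)) as [Dj|nDj].
    - destruct (proj2 (proj1 (D_pos j) Dj)) as [W hW]. exists W; tauto.
    - destruct (classic (B j j)) as [Bj|nBj].
      + destruct (proj1 (D_neg j Bj) nDj) as [W hW]. exists W; tauto.
      + exists (fun _ => False); tauto. }
  destruct (functional_choice _ choice_W) as [WF hWF].
  set (X := encode (fun c => match c with 0 => encode (is_nth D) | S j => WF j end)).
  assert (col0 : decode X 0 = encode (is_nth D))
    by (unfold X; rewrite decode_encode; reflexivity).
  assert (colS : forall j, decode X (S j) = WF j)
    by (intro; unfold X; rewrite decode_encode; reflexivity).
  exists X. unfold enum_cond. rewrite col0, decode_encode. setoid_rewrite colS.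
  split; [|reflexivity].
  split; [|split; [|exact (is_nth_increasing_enum D)]].
  - intros i j [Dj _]. split; [apply D_pos, Dj|]. apply hWF, Dj.
  - intros j Bj. destruct (classic (D j)) as [Dj|nDj].
    + right; exists (count_below D j); split; auto.
    + left; apply hWF; auto.
Qed.

Lemma collapse_sigma11 m n : collapse B D m n <-> sigma11_rel (enum_sigma P Q) B m n.
Proof.
  unfold sigma11_rel, collapse. setoid_rewrite enum_sigma_sat. split.
  - intros (j & j' & hj & hj' & Bjj'). destruct enum_cond_witness as (X & cond & HX).
    exists X; split; auto. exists j, j'; rewrite !HX; auto.
  - intros (X & cond & j & j' & hj & hj' & Bjj').
    rewrite (enum_cond_is_nth X cond) in hj, hj'. eauto.
Qed.

Lemma collapse_pi11 m n : collapse B D m n <-> pi11_rel (enum_pi P Q) B m n.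
Proof.
  unfold pi11_rel, collapse. setoid_rewrite enum_pi_sat. split.
  - intros (j & j' & hj & hj' & Bjj') X [cond no_edge].
    apply (no_edge j j'); try apply (enum_cond_is_nth X cond); assumption.
  - intro h. destruct enum_cond_witness as (X & cond & HX).
    apply NNPP; intro no_edge. apply (h X); split; auto.
    intros j j' hj hj' Bjj'. rewrite HX in hj, hj'. apply no_edge; eauto.
Qed.

End EnumerationDefinable.

Lemma sH_le_of_tests (L : Type) (ltL : L -> L -> Prop) (A : Type) (ltA : A -> A -> Prop)
  (iota : A -> L) (P Q : witnessed_test) :
  inhabited A -> (forall a a', iota a = iota a' -> a = a') ->
  (forall a a', ltA a a' <-> ltL (iota a) (iota a')) ->
  (forall B (C : copy_data L ltL B) x,
     (exists W, test_sem P B W (code C x)) <-> exists a, x = iota a) ->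
  (forall B (C : copy_data L ltL B) x,
     (exists W, test_sem Q B W (code C x)) <-> ~ exists a, x = iota a) ->
  sH_le (is_copy A ltA) (is_copy L ltL).
Proof.
  intros inhA inj iota_lt test_P test_Q.
  exists (enum_sigma P Q), (enum_pi P Q). intros B copyB.
  destruct (copy_data_of_is_copy _ _ _ copyB) as [C].
  set (D := fun j => B j j /\ exists a, point C j = iota a).
  assert (at_point : forall j, B j j -> j = code C (point C j)).
  { intros j Bj; symmetry; apply code_point, Bj. }
  assert (D_pos : forall j, D j <-> B j j /\ exists W, test_sem P B W j).
  { intro j; unfold D; split; intros [Bj h]; split; auto.
    - rewrite (at_point j Bj), test_P; exact h.
    - rewrite (at_point j Bj), test_P in h; exact h. }
  assert (D_neg : forall j, B j j -> (~ D j <-> exists W, test_sem Q B W j)).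
  { intros j Bj. transitivity (~ exists a, point C j = iota a).
    - unfold D; split; [intros nD hD; apply nD; auto | intros h [_ hD]; exact (h hD)].
    - rewrite <- test_Q, <- (at_point j Bj); reflexivity. }
  exists (collapse B D). split; [apply collapse_is_copy; auto|].
  split; intros m n; [apply collapse_sigma11 | apply collapse_pi11]; auto.
Qed.

Lemma wf_monotone_no_descent (T : Type) (lt : T -> T -> Prop) (F : T -> T -> Prop) :
  well_founded lt -> (forall x, exists y, F x y) ->
  (forall x x' y y', F x y -> F x' y' -> lt x x' -> lt y y') ->
  forall x y, F x y -> ~ lt y x.
Proof.
  intros wf tot mono x; induction (wf x) as [x _ IH]; intros y Fxy lt_yx.
  destruct (tot y) as [y' Fyy']. exact (IH y lt_yx y' Fyy' (mono _ _ _ _ Fyy' Fxy lt_yx)).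
Qed.

Lemma sum_lt_irrefl A0 A1 (lt0 : A0 -> A0 -> Prop) (lt1 : A1 -> A1 -> Prop) :
  (forall a, ~ lt0 a a) -> (forall b, ~ lt1 b b) -> forall x, ~ sum_lt A0 A1 lt0 lt1 x x.
Proof. intros irr0 irr1 [a|b]; simpl; auto. Qed.

Lemma sum_lt_wf A0 A1 (lt0 : A0 -> A0 -> Prop) (lt1 : A1 -> A1 -> Prop) :
  well_founded lt0 -> well_founded lt1 -> well_founded (sum_lt A0 A1 lt0 lt1).
Proof.
  intros wf0 wf1.
  assert (acc_inl : forall a, Acc (sum_lt A0 A1 lt0 lt1) (inl a)).
  { intro a; induction (wf0 a) as [a _ IH]; constructor.
    intros [a'|b'] h; [apply IH, h | contradiction]. }
  intros [a|b]; auto. induction (wf1 b) as [b _ IH]; constructor.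
  intros [a'|b'] h; [apply acc_inl | apply IH, h].
Qed.

Lemma not_inl_iff_inr (X Y : Type) (x : X + Y) : (~ exists a, x = inl a) <-> exists b, x = inr b.
Proof.
  destruct x as [a|b]; split.
  - intro h; exfalso; eauto.
  - intros [b E]; discriminate.
  - eauto.
  - intros _ [a E]; discriminate.
Qed.

Lemma not_inr_iff_inl (X Y : Type) (x : X + Y) : (~ exists b, x = inr b) <-> exists a, x = inl a.
Proof.
  destruct x as [a|b]; split.
  - eauto.
  - intros _ [b E]; discriminate.
  - intro h; exfalso; eauto.
  - intros [a E]; discriminate.
Qed.

Section SummandTests.
Variables (A0 : Type) (lt0 : A0 -> A0 -> Prop) (A1 : Type) (lt1 : A1 -> A1 -> Prop).
Hypothesis irr0 : forall a, ~ lt0 a a.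
Hypothesis irr1 : forall b, ~ lt1 b b.
Hypothesis wf0 : well_founded lt0.
Hypothesis wf1 : well_founded lt1.
Hypothesis indec0 : add_indecomposable A0 lt0.
Hypothesis lt10 : ord_lt A1 lt1 A0 lt0.

Local Notation ltL := (sum_lt A0 A1 lt0 lt1).

Variables (B : nat -> nat -> Prop) (C : copy_data (A0 + A1) ltL B).

Let irrL : forall x, ~ ltL x x := sum_lt_irrefl _ _ _ _ irr0 irr1.
Let strict_codeL : forall x y, strict B (code C x) (code C y) <-> ltL x y :=
  strict_code _ _ _ C irrL.
Let wfL : well_founded ltL := sum_lt_wf _ _ _ _ wf0 wf1.

Lemma strict_below_inl i a :
  strict B i (code C (inl a)) -> exists s : seg A0 lt0 a, i = code C (inl (proj1_sig s)).
Proof.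
  intro h. destruct (strict_code_inv _ _ _ C irrL _ _ h) as [E h'].
  destruct (point C i) as [a'|b']; [|contradiction]. exists (exist _ a' h'); exact E.
Qed.

Lemma first_summand_seg_twice_embeds a : exists W, seg_twice_embeds B W (code C (inl a)).
Proof.
  destruct (proj2 indec0 a a) as (c & phi & _ & _ & _ & phi_lt).
  set (G := fun b i j => exists s : seg A0 lt0 a, i = code C (inl (proj1_sig s)) /\
              j = code C (inl (proj1_sig (phi (match b with 0 => inl s | _ => inr s end))))).
  set (W := encode (fun b => encode (G b))).
  assert (HW : forall b, decode (decode W b) = G b)
    by (intro b; unfold W; rewrite decode_encode; apply decode_encode).
  assert (total : forall b, total_below B (G b) (code C (inl a))).
  { intros b i hi. destruct (strict_below_inl i a hi) as [s ->].
    eexists; split; [| exists s; split; reflexivity]. apply code_dom. }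
  assert (monotone : forall b, monotone_below B (G b) (code C (inl a))).
  { intros b i i' j j' (s & -> & ->) (s' & -> & ->) _ _ h.
    apply strict_codeL in h. apply strict_codeL, phi_lt. destruct b; exact h. }
  exists W; unfold seg_twice_embeds; rewrite !HW.
  split; [|split; [|split; [|split]]]; auto.
  intros i i' j j' (s & -> & ->) (s' & -> & ->) _ _. apply strict_codeL, phi_lt; exact I.
Qed.

(* Composing with [seg a + seg a ~ seg c] would embed the whole order below [inl c]. *)
Lemma first_summand_not_embeds_in_seg_twice a W : ~ embeds_in_seg_twice B W (code C (inl a)).
Proof.
  intros [total monotone].
  destruct (proj2 indec0 a a) as (c & phi & _ & _ & _ & phi_lt).
  set (G := decode (decode W 0)). set (S := decode W 1).
  set (F := fun w u : A0 + A1 => exists s : seg A0 lt0 a,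
     G (code C w) (code C (inl (proj1_sig s))) /\
     ((~ S (code C w) /\ u = inl (proj1_sig (phi (inl s)))) \/
      (S (code C w) /\ u = inl (proj1_sig (phi (inr s)))))).
  assert (F_total : forall w, exists u, F w u).
  { intro w. destruct (total (code C w) (code_dom C w)) as (j & Gj & hj).
    destruct (strict_below_inl j a hj) as [s ->].
    destruct (classic (S (code C w))); eexists; exists s; split; eauto. }
  assert (F_mono : forall w w' u u', F w u -> F w' u' -> ltL w w' -> ltL u u').
  { intros w w' u u' (s & Gs & hu) (s' & Gs' & hu') h.
    destruct (monotone _ _ _ _ Gs Gs' (code_dom C w) (code_dom C w') (proj2 (strict_codeL w w') h))
      as [[nS S'] | [iffS hl]].
    - destruct hu as [[_ ->] | [? _]]; [|tauto]. destruct hu' as [[? _] | [_ ->]]; [tauto|].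
      apply (phi_lt (inl s) (inr s')); exact I.
    - apply strict_codeL in hl.
      destruct hu as [[n1 ->] | [y1 ->]]; destruct hu' as [[n2 ->] | [y2 ->]]; try tauto.
      + apply (phi_lt (inl s) (inl s')); exact hl.
      + apply (phi_lt (inr s) (inr s')); exact hl. }
  destruct (F_total (inl c)) as [u Fu].
  apply (wf_monotone_no_descent _ _ F wfL F_total F_mono _ _ Fu).
  destruct Fu as (s & _ & [[_ ->] | [_ ->]]); apply proj2_sig.
Qed.

(* [inl a] goes to the first copy, [inr b] to the second copy inside [A0], via [A1 ~ seg a*]. *)
Lemma second_summand_embeds_in_seg_twice b : exists W, embeds_in_seg_twice B W (code C (inr b)).
Proof.
  destruct lt10 as (a_star & eps & _ & _ & _ & eps_lt).
  set (tgt := fun w : A0 + A1 =>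
    match w with inl a => inl a | inr b' => inl (proj1_sig (eps b')) end : A0 + A1).
  set (G := fun k j => exists w, k = code C w /\ j = code C (tgt w)).
  set (S := fun k => exists b', k = code C (inr b')).
  set (W := encode (fun c => match c with 0 => encode G | _ => S end)).
  assert (HG : decode (decode W 0) = G)
    by (unfold W; rewrite decode_encode; apply decode_encode).
  assert (HS : decode W 1 = S) by (unfold W; rewrite decode_encode; reflexivity).
  assert (S_code : forall w, S (code C w) <-> exists b', w = inr b').
  { intro w; split; intros [b' E]; exists b'; [|rewrite E; reflexivity].
    rewrite <- (point_code C w), E; apply point_code. }
  exists W; unfold embeds_in_seg_twice; rewrite HG, HS. split.
  - intros k Bk. exists (code C (tgt (point C k))); split.
    + exists (point C k); split; auto. symmetry; apply code_point, Bk.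
    + apply strict_codeL. destruct (point C k); exact I.
  - intros k k' j j' (w & -> & ->) (w' & -> & ->) _ _ h.
    rewrite !S_code. rewrite strict_codeL in h |- *.
    destruct w as [a1|b1], w' as [a2|b2]; simpl in h |- *.
    + right; split; [firstorder congruence | exact h].
    + left; split; [firstorder congruence | eauto].
    + contradiction.
    + right; split; [firstorder eauto | apply eps_lt, h].
Qed.

(* Two copies of [A0 + seg b] would put [A0 + A0] below a point of [A0 + A1];
   sending [inr b'] through [A1 ~ seg a*] makes that a descending self-embedding. *)
Lemma second_summand_no_seg_twice_embeds b W : ~ seg_twice_embeds B W (code C (inr b)).
Proof.
  intros (total0 & total1 & mono0 & mono1 & cross).
  destruct lt10 as (a_star & eps & _ & _ & _ & eps_lt).
  set (G0 := decode (decode W 0)). set (G1 := decode (decode W 1)).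
  assert (below : forall a, strict B (code C (inl a)) (code C (inr b)))
    by (intro; apply strict_codeL; exact I).
  set (F := fun w u : A0 + A1 => match w with
    | inl a => G0 (code C (inl a)) (code C u)
    | inr b' => G1 (code C (inl (proj1_sig (eps b')))) (code C u) end).
  assert (graph_point : forall G i, total_below B G (code C (inr b)) ->
    strict B i (code C (inr b)) -> exists u, G i (code C u)).
  { intros G i tot hi. destruct (tot i hi) as (j & Bj & Gj).
    exists (point C j); rewrite code_point; auto. }
  assert (F_total : forall w, exists u, F w u)
    by (intros [a|b']; apply graph_point; auto).
  assert (F_mono : forall w w' u u', F w u -> F w' u' -> ltL w w' -> ltL u u').
  { intros [a1|b1] [a2|b2] u u' h1 h2 h; simpl in h; try contradiction; apply strict_codeL.
    - apply (mono0 _ _ _ _ h1 h2 (below _) (below _)), strict_codeL, h.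
    - apply (cross _ _ _ _ h1 h2 (below _) (below _)).
    - apply (mono1 _ _ _ _ h1 h2 (below _) (below _)), strict_codeL, eps_lt, h. }
  destruct (graph_point G1 _ total1 (below a_star)) as [u_star G1_star].
  assert (bounded : forall w u, F w u -> ltL u u_star).
  { intros [a|b'] u h; apply strict_codeL.
    - apply (cross _ _ _ _ h G1_star (below _) (below _)).
    - apply (mono1 _ _ _ _ h G1_star (below _) (below _)), strict_codeL, proj2_sig. }
  destruct (F_total u_star) as [u Fu].
  exact (wf_monotone_no_descent _ _ F wfL F_total F_mono _ _ Fu (bounded _ _ Fu)).
Qed.

Lemma seg_twice_embeds_iff x :
  (exists W, seg_twice_embeds B W (code C x)) <-> exists a, x = inl a.
Proof.
  split.
  - intros [W h]. destruct x as [a|b]; eauto.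
    exfalso; exact (second_summand_no_seg_twice_embeds b W h).
  - intros [a ->]; apply first_summand_seg_twice_embeds.
Qed.

Lemma embeds_in_seg_twice_iff x :
  (exists W, embeds_in_seg_twice B W (code C x)) <-> exists b, x = inr b.
Proof.
  split.
  - intros [W h]. destruct x as [a|b]; eauto.
    exfalso; exact (first_summand_not_embeds_in_seg_twice a W h).
  - intros [b ->]; apply second_summand_embeds_in_seg_twice.
Qed.

End SummandTests.

Theorem mainTheorem11 :
  forall (A0 : Type) (lt0 : A0 -> A0 -> Prop) (A1 : Type) (lt1 : A1 -> A1 -> Prop),
    is_wellorder A0 lt0 -> countable A0 ->
    is_wellorder A1 lt1 -> countable A1 ->
    add_indecomposable A0 lt0 -> add_indecomposable A1 lt1 ->
    ord_lt A1 lt1 A0 lt0 ->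
    sH_le (is_copy A0 lt0) (is_copy (A0 + A1) (sum_lt A0 A1 lt0 lt1)) /\
    sH_le (is_copy A1 lt1) (is_copy (A0 + A1) (sum_lt A0 A1 lt0 lt1)).
Proof.
  intros A0 lt0 A1 lt1 (irr0 & _ & _ & wf0) _ (irr1 & _ & _ & wf1) _ indec0 [inh1 _] lt10.
  split.
  - apply (sH_le_of_tests _ _ _ _ inl seg_twice_embeds_test embeds_in_seg_twice_test).
    + exact (proj1 indec0).
    + congruence.
    + reflexivity.
    + intros B C x; apply seg_twice_embeds_iff; auto.
    + intros B C x; rewrite not_inl_iff_inr; apply embeds_in_seg_twice_iff; auto.
  - apply (sH_le_of_tests _ _ _ _ inr embeds_in_seg_twice_test seg_twice_embeds_test).
    + exact inh1.
    + congruence.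
    + reflexivity.
    + intros B C x; apply embeds_in_seg_twice_iff; auto.
    + intros B C x; rewrite not_inr_iff_inl; apply seg_twice_embeds_iff; auto.
Qed.
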